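(* Let $0<q<1$ and let $x,y$ be real numbers with $|x|<1$ and $|y|<1$. Then \[ \sum_{m=0}^\infty\sum_{n=0}^\infty (-1)^{m+n}[x]_q^{m+1}[y]_q^{n+1}\,\zeta[m+2,\{1\}^n] = 1-\frac{\Gamma_q(1+x)\,\Gamma_q(1+y)}{\Gamma_q(1+x+y)}. \]
   Context: Fix $0<q<1$ and for real $x$ put $[x]_q := (1-q^x)/(1-q)$. For positive integers $s_1,\dots,s_N$ with $s_1>1$, $\zeta[s_1,\dots,s_N] := \sum_{k_1>\cdots>k_N>0}\prod_{j=1}^N q^{(s_j-1)k_j}/[k_j]_q^{s_j}$ (sum over positive integers); $\{1\}^n$ denotes $n$ consecutive copies of $1$. For real $a,b$ put $(a+b)_q^\infty := \prod_{k=0}^\infty(a+bq^k)$. The $q$-gamma function is $\Gamma_q(x) := \dfrac{(1-q)_q^\infty\,(1-q)^{1-x}}{(1-q^x)_q^\infty}$, i.e. $\Gamma_q(x)=(1-q)^{1-x}\prod_{k\ge0}\frac{1-q^{k+1}}{1-q^{k+x}}$. *)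

From Stdlib Require Import Reals List.
From Coquelicot Require Import Coquelicot.
Open Scope R_scope.

Definition qnum (q x : R) : R := (1 - Rpower q x) / (1 - q).

Definition mzv_term (q : R) (s k : nat) : R :=
  q ^ ((s - 1) * k) / (qnum q (INR k)) ^ s.

(* Truncated nested sum: H q ss k = sum over k > k_1 > ... > k_N > 0
   of prod_j mzv_term q s_j k_j, where ss = [s_1; ...; s_N].  H q [] k = 1. *)
Fixpoint mzv_trunc (q : R) (ss : list nat) (k : nat) : R :=
  match ss with
  | nil => 1
  | s :: rest =>
      sum_n_m (fun j => mzv_term q s j * mzv_trunc q rest j) 1 (k - 1)
  end.
(* note: sum_n_m f 1 0 = 0 (empty range), so k = 0 or 1 gives 0 *)

(* zeta[s_1,...,s_N] = sum_{k_1 > ... > k_N > 0} prod_j q^{(s_j-1)k_j}/[k_j]_q^{s_j}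
   (outer sum over k_1 >= 1, as a Coquelicot series). *)
Definition qzeta (q : R) (ss : list nat) : R :=
  match ss with
  | nil => 1
  | s :: rest => Series (fun n => mzv_term q s (S n) * mzv_trunc q rest (S n))
  end.

Fixpoint prod_lt (f : nat -> R) (N : nat) : R :=
  match N with
  | O => 1
  | S N' => prod_lt f N' * f N'
  end.

Definition qpoch_inf (q a b : R) : R :=
  real (Lim_seq (fun N => prod_lt (fun k => a + b * q ^ k) N)).

Definition qGamma (q x : R) : R :=
  qpoch_inf q 1 (- q) * Rpower (1 - q) (1 - x) / qpoch_inf q 1 (- Rpower q x).

From Stdlib Require Import Reals List Lra Lia Psatz.
From Coquelicot Require Import Coquelicot.
Open Scope R_scope.

(* Write a = [x]_q, b = [y]_q, u_k = 1/[k]_q and v_k = q^k/[k]_q, so that the k-th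
   summand of zeta[s+1, ...] is u_k v_k^s times a truncated sum.  The truncated sums
   of zeta[{1}^n] are the elementary symmetric functions of u_1, ..., u_(k-1); hence
   summing over n for fixed m produces the products prod_(0<j<k) (1 - b u_j), and
   summing the remaining geometric series over m collapses the double series to
     sum_k b u_k prod_(0<j<k) (1 - b u_j) a v_k / (1 + a v_k).
   With X = q^x and Y = q^y this is 1 - sum_k c_k (1 - X)/(1 - X q^k), where
   c_k = prod_(i<k) (qY - q^(i+1))/(1 - q^(i+1)): a q-analogue of Gauss's summation.
   Like the q-binomial theorem it rests on, it is evaluated by iterating a functional
   equation under X |-> qX down to X = 0, and its value
     (q;q)_oo (q^(1+x+y);q)_oo / ((q^(1+x);q)_oo (q^(1+y);q)_oo)
   is the Gamma_q quotient.  Every interchange of summations is dominated by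
   u_k v_k prod_(0<j<k) (1 + t u_j) with |b| < t < 1/q, which decays geometrically. *)

Lemma is_series_iff_lim_sum_n (a : nat -> R) (l : R) :
  is_series a l <-> is_lim_seq (sum_n a) l.
Proof. split; intro H; exact H. Qed.

Lemma sum_n_succ (a : nat -> R) n : sum_n a (S n) = sum_n a n + a (S n).
Proof. exact (sum_Sn a n). Qed.

Lemma sum_n_Rplus (u v : nat -> R) N :
  sum_n (fun k => u k + v k) N = sum_n u N + sum_n v N.
Proof. exact (sum_n_plus u v N). Qed.

Lemma sum_n_Rmult_l (c : R) (u : nat -> R) N :
  sum_n (fun k => c * u k) N = c * sum_n u N.
Proof. exact (sum_n_mult_l c u N). Qed.

Lemma sum_n_shift (u : nat -> R) N :
  sum_n u (S N) = u O + sum_n (fun k => u (S k)) N.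
Proof.
  induction N.
  - rewrite sum_n_succ, !sum_O. reflexivity.
  - rewrite sum_n_succ, IHN, (sum_n_succ _ N). lra.
Qed.

Lemma sum_n_nonneg (u : nat -> R) N : (forall k, 0 <= u k) -> 0 <= sum_n u N.
Proof.
  intro H. induction N.
  - rewrite sum_O; auto.
  - rewrite sum_n_succ. specialize (H (S N)). lra.
Qed.

Lemma sum_n_ge_term (u : nat -> R) N n :
  (forall k, 0 <= u k) -> (n <= N)%nat -> u n <= sum_n u N.
Proof.
  intros H Hn. induction N.
  - replace n with O by lia. rewrite sum_O; lra.
  - rewrite sum_n_succ. destruct (Nat.eq_dec n (S N)) as [-> | Hne].
    + assert (0 <= sum_n u N) by (apply sum_n_nonneg; auto). lra.
    + assert (u n <= sum_n u N) by (apply IHN; lia). specialize (H (S N)). lra.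
Qed.

Lemma sum_n_alt_geom (r : R) M : 1 + r <> 0 ->
  sum_n (fun m => (-1) ^ m * r ^ (m + 1)) M = r * (1 - (- r) ^ S M) / (1 + r).
Proof.
  intro Hr. induction M.
  - rewrite sum_O. simpl. field; auto.
  - rewrite sum_n_succ, IHM. replace (- r) with ((-1) * r) by ring. rewrite !Rpow_mult_distr.
    replace (S M + 1)%nat with (S (S M)) by lia. simpl. field; auto.
Qed.

Lemma pow_le_1 x n : 0 <= x <= 1 -> x ^ n <= 1.
Proof. intro H. rewrite <- (pow1 n). apply pow_incr. exact H. Qed.

Lemma is_lim_seq_geom_error (s : nat -> R) (l K rho : R) :
  0 <= rho < 1 -> (forall N, Rabs (s N - l) <= K * rho ^ N) -> is_lim_seq s l.
Proof.
  intros Hr H.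
  assert (HK : is_lim_seq (fun N => K * rho ^ N) 0).
  { assert (Hg := is_lim_seq_scal_l _ K 0
                  (is_lim_seq_geom rho ltac:(rewrite Rabs_pos_eq; lra))).
    simpl in Hg. rewrite Rmult_0_r in Hg. exact Hg. }
  apply is_lim_seq_le_le with (u := fun N => l - K * rho ^ N) (w := fun N => l + K * rho ^ N).
  - intro N. specialize (H N). apply Rabs_le_between in H. lra.
  - apply (is_lim_seq_minus _ _ l 0 l (is_lim_seq_const l) HK).
    unfold is_Rbar_minus, is_Rbar_plus; simpl. f_equal; f_equal; ring.
  - apply (is_lim_seq_plus _ _ l 0 l (is_lim_seq_const l) HK).
    unfold is_Rbar_plus; simpl. f_equal; f_equal; ring.
Qed.

Lemma is_lim_seq_unique_R (u : nat -> R) (a b : R) :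
  is_lim_seq u a -> is_lim_seq u b -> a = b.
Proof.
  intros Ha Hb. apply is_lim_seq_unique in Ha. apply is_lim_seq_unique in Hb.
  rewrite Ha in Hb. injection Hb; auto.
Qed.

Lemma is_lim_seq_mult_eq (A B alpha beta : R) (a b c : nat -> R) :
  is_lim_seq a alpha -> is_lim_seq b beta -> is_lim_seq c B ->
  (forall N, a N * A = b N * c N) -> alpha * A = beta * B.
Proof.
  intros Ha Hb Hc E.
  apply (is_lim_seq_unique_R (fun N => a N * A)).
  - apply (is_lim_seq_scal_r a A alpha Ha).
  - apply (is_lim_seq_ext (fun N => b N * c N)); [intro N; rewrite E; auto |].
    apply (is_lim_seq_mult' _ _ _ _ Hb Hc).
Qed.

Lemma ex_series_Rabs_le (a b : nat -> R) :
  ex_series b -> (forall k, Rabs (a k) <= b k) -> ex_series a.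
Proof. intros Hb H. apply (@ex_series_le R_AbsRing R_CompleteNormedModule) with b; auto. Qed.

Lemma Series_Rabs_le (a b : nat -> R) :
  ex_series b -> (forall k, Rabs (a k) <= b k) -> Rabs (Series a) <= Series b.
Proof.
  intros Hb H. eapply Rle_trans.
  - apply Series_Rabs. apply ex_series_Rabs_le with b; auto.
    intro k. rewrite Rabs_Rabsolu. auto.
  - apply Series_le; auto. intro k. split; auto. apply Rabs_pos.
Qed.

Lemma is_lim_seq_0_dominated (c V : nat -> R) (K : R) :
  ex_series (fun k => Rabs (c k)) -> (forall k, Rabs (V k) <= K * Rabs (c k)) ->
  is_lim_seq V 0.
Proof.
  intros Hc H. apply ex_series_lim_0 in Hc.
  assert (HK := is_lim_seq_scal_l _ K 0 Hc). simpl in HK. rewrite Rmult_0_r in HK.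
  apply is_lim_seq_le_le with (u := fun k => - (K * Rabs (c k))) (w := fun k => K * Rabs (c k)).
  - intro k. specialize (H k). apply Rabs_le_between in H. lra.
  - apply is_lim_seq_opp in HK. simpl in HK. rewrite Ropp_0 in HK. exact HK.
  - exact HK.
Qed.

Lemma ex_series_sum_n (f : nat -> nat -> R) N :
  (forall n, ex_series (f n)) -> ex_series (fun i => sum_n (fun n => f n i) N).
Proof.
  intro H. induction N.
  - apply ex_series_ext with (f O); auto. intro. rewrite sum_O; auto.
  - apply ex_series_ext with (fun i => sum_n (fun n => f n i) N + f (S N) i).
    + intro. rewrite sum_n_succ; auto.
    + apply (ex_series_plus (fun i => sum_n (fun n => f n i) N) (f (S N))); auto.
Qed.

Lemma Series_sum_n (f : nat -> nat -> R) N :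
  (forall n, ex_series (f n)) ->
  sum_n (fun n => Series (f n)) N = Series (fun i => sum_n (fun n => f n i) N).
Proof.
  intro H. induction N.
  - rewrite sum_O. apply Series_ext. intro. rewrite sum_O; auto.
  - rewrite sum_n_succ, IHN, <- Series_plus by (apply ex_series_sum_n || apply H; auto).
    apply Series_ext. intro. rewrite sum_n_succ; auto.
Qed.

Lemma is_series_telescope (a V : nat -> R) :
  (forall k, a k = V k - V (S k)) -> V O = 0 -> is_lim_seq V 0 -> is_series a 0.
Proof.
  intros Ha H0 HV. apply is_series_iff_lim_sum_n.
  assert (E : forall N, sum_n a N = - V (S N)).
  { induction N.
    - rewrite sum_O, Ha, H0. lra.
    - rewrite sum_n_succ, IHN, Ha. lra. }
  apply is_lim_seq_ext with (u := fun N => - V (S N)).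
  - intro. rewrite E; auto.
  - apply is_lim_seq_incr_1 in HV. apply is_lim_seq_opp in HV. simpl in HV.
    rewrite Ropp_0 in HV. exact HV.
Qed.

Lemma ex_series_ratio_le (e : nat -> R) (rho : R) :
  0 <= rho < 1 -> (forall i, 0 <= e i) -> (forall i, e (S i) <= rho * e i) -> ex_series e.
Proof.
  intros Hr H0 H.
  assert (B : forall i, e i <= e O * rho ^ i).
  { induction i; simpl. lra. specialize (H i). nra. }
  apply ex_series_Rabs_le with (fun i => e O * rho ^ i).
  - apply (ex_series_scal_l (e O) (fun i => rho ^ i)). apply ex_series_geom.
    rewrite Rabs_pos_eq; lra.
  - intro n. rewrite Rabs_pos_eq by auto. auto.
Qed.

Lemma prod_lt_nonneg f N : (forall k, 0 <= f k) -> 0 <= prod_lt f N.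
Proof. intro H; induction N; simpl. lra. apply Rmult_le_pos; auto. Qed.

Lemma prod_lt_Rabs f N : Rabs (prod_lt f N) = prod_lt (fun k => Rabs (f k)) N.
Proof. induction N; simpl. apply Rabs_R1. rewrite Rabs_mult, IHN. auto. Qed.

Lemma prod_lt_le f g N : (forall k, 0 <= f k <= g k) -> prod_lt f N <= prod_lt g N.
Proof.
  intro H; induction N; simpl. lra.
  apply Rmult_le_compat; auto; try apply H. apply prod_lt_nonneg. intro k; apply H.
Qed.

Lemma exp_le_compat a b : a <= b -> exp a <= exp b.
Proof. intros [H | ->]; [left; apply exp_increasing; auto | lra]. Qed.

(** * Infinite q-products *)

Section Fixed_q.
Variable q : R.
Hypothesis hq0 : 0 < q.
Hypothesis hq1 : q < 1.

Lemma qpow_pos k : 0 < q ^ k.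
Proof. apply pow_lt; lra. Qed.

Lemma qpow_le_1 k : q ^ k <= 1.
Proof. apply pow_le_1; lra. Qed.

Lemma qpow_succ_lt_1 k : q ^ S k < 1.
Proof. apply pow_lt_1_compat; lra || lia. Qed.

Lemma qpow_succ_le k : q ^ S k <= q.
Proof. simpl. assert (H := qpow_le_1 k). nra. Qed.

Lemma qint_succ N : (1 - q ^ N) / (1 - q) + q ^ N = (1 - q ^ S N) / (1 - q).
Proof. simpl. field. lra. Qed.

Lemma qint_le N : (1 - q ^ N) / (1 - q) <= / (1 - q).
Proof.
  assert (0 <= q ^ N) by (apply pow_le; lra).
  unfold Rdiv. rewrite <- (Rmult_1_l (/ (1 - q))) at 2.
  apply Rmult_le_compat_r; [left; apply Rinv_0_lt_compat |]; lra.
Qed.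

Lemma qprod_le_exp (d : R) N : 0 <= d ->
  prod_lt (fun k => 1 + d * q ^ k) N <= exp (d * ((1 - q ^ N) / (1 - q))).
Proof.
  intro Hd. induction N; cbn [prod_lt].
  - rewrite pow_O. replace (d * ((1 - 1) / (1 - q))) with 0 by (field; lra).
    rewrite exp_0. lra.
  - rewrite <- qint_succ, (Rmult_plus_distr_l _ ((1 - q ^ N) / (1 - q))), exp_plus.
    assert (0 <= q ^ N) by (apply pow_le; lra).
    apply Rmult_le_compat; auto.
    + apply prod_lt_nonneg. intro k. assert (0 <= q ^ k) by (apply pow_le; lra). nra.
    + nra.
    + apply exp_ineq1_le.
Qed.

Lemma exp_le_one_minus (s : R) : 0 <= s < 1 -> exp (- (s / (1 - s))) <= 1 - s.
Proof.
  intro Hs.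
  assert (H1 : 1 + s / (1 - s) <= exp (s / (1 - s))) by apply exp_ineq1_le.
  assert (H2 : 1 + s / (1 - s) = / (1 - s)) by (field; lra).
  assert (0 < / (1 - s)) by (apply Rinv_0_lt_compat; lra).
  rewrite exp_Ropp. apply Rle_trans with (/ / (1 - s)).
  - apply Rinv_le_contravar; lra.
  - rewrite Rinv_inv. lra.
Qed.

Lemma exp_le_qprod (d : R) N : 0 <= d < 1 ->
  exp (- (d / (1 - d)) * ((1 - q ^ N) / (1 - q))) <= prod_lt (fun k => 1 + - d * q ^ k) N.
Proof.
  intro Hd. induction N; cbn [prod_lt].
  - rewrite pow_O. replace (- (d / (1 - d)) * ((1 - 1) / (1 - q))) with 0 by (field; lra).
    rewrite exp_0. lra.
  - rewrite <- qint_succ, (Rmult_plus_distr_l _ ((1 - q ^ N) / (1 - q))), exp_plus.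
    assert (Hq : 0 < q ^ N <= 1) by (split; [apply pow_lt | apply pow_le_1]; lra).
    apply Rmult_le_compat; auto; try (left; apply exp_pos).
    set (s := d * q ^ N).
    assert (Hs : 0 <= s <= d) by (unfold s; nra).
    replace (1 + - d * q ^ N) with (1 - s) by (unfold s; ring).
    apply Rle_trans with (exp (- (s / (1 - s)))); [| apply exp_le_one_minus; lra].
    apply exp_le_compat.
    replace (- (d / (1 - d)) * q ^ N) with (- (s / (1 - d))) by (unfold s; field; lra).
    apply Ropp_le_contravar, Rmult_le_compat_l; [lra |].
    apply Rinv_le_contravar; lra.
Qed.

Lemma qprod_Rabs_le (c : R) N :
  Rabs (prod_lt (fun k => 1 + c * q ^ k) N) <= exp (Rabs c / (1 - q)).
Proof.
  rewrite prod_lt_Rabs.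
  apply Rle_trans with (prod_lt (fun k => 1 + Rabs c * q ^ k) N).
  - apply prod_lt_le. intro k. split; [apply Rabs_pos |].
    assert (0 < q ^ k) by (apply pow_lt; lra).
    eapply Rle_trans; [apply Rabs_triang |].
    rewrite Rabs_R1, Rabs_mult, (Rabs_pos_eq (q ^ k)) by lra. lra.
  - eapply Rle_trans; [apply qprod_le_exp, Rabs_pos |].
    apply exp_le_compat. apply Rmult_le_compat_l; [apply Rabs_pos | apply qint_le].
Qed.

Lemma ex_finite_lim_qprod (c : R) :
  ex_finite_lim_seq (fun N => prod_lt (fun k => 1 + c * q ^ k) N).
Proof.
  set (P := fun N => prod_lt (fun k => 1 + c * q ^ k) N).
  (* the increments P (S N) - P N = P N * c * q ^ N are dominated by a geometric series *)
  assert (Hd : ex_series (fun N => P (S N) - P N)).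
  { apply ex_series_Rabs_le with (fun N => (exp (Rabs c / (1 - q)) * Rabs c) * q ^ N).
    - apply (ex_series_scal_l _ (fun i => q ^ i)). apply ex_series_geom.
      rewrite Rabs_pos_eq; lra.
    - intro n. unfold P; cbn [prod_lt].
      replace (prod_lt (fun k => 1 + c * q ^ k) n * (1 + c * q ^ n)
               - prod_lt (fun k => 1 + c * q ^ k) n)
        with (prod_lt (fun k => 1 + c * q ^ k) n * c * q ^ n) by ring.
      rewrite !Rabs_mult, (Rabs_pos_eq (q ^ n)) by (apply pow_le; lra).
      apply Rmult_le_compat_r; [apply pow_le; lra |].
      apply Rmult_le_compat_r; [apply Rabs_pos | apply qprod_Rabs_le]. }
  destruct Hd as [l Hl]. exists (l + P O).
  apply is_series_iff_lim_sum_n in Hl.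
  apply is_lim_seq_incr_1.
  apply is_lim_seq_ext with (u := fun N => sum_n (fun N => P (S N) - P N) N + P O).
  - intro N. induction N.
    + rewrite sum_O. ring.
    + rewrite sum_n_succ. lra.
  - apply is_lim_seq_plus'; auto. apply is_lim_seq_const.
Qed.

Lemma is_lim_seq_qpoch_inf (c : R) :
  is_lim_seq (fun N => prod_lt (fun k => 1 + c * q ^ k) N) (qpoch_inf q 1 c).
Proof.
  destruct (ex_finite_lim_qprod c) as [l Hl]. unfold qpoch_inf.
  rewrite (is_lim_seq_unique _ _ Hl). exact Hl.
Qed.

Lemma qpoch_inf_pos (d : R) : 0 <= d < 1 -> 0 < qpoch_inf q 1 (- d).
Proof.
  intro Hd.
  set (L := exp (- (d / (1 - d)) * / (1 - q))).
  apply Rlt_le_trans with L; [apply exp_pos |].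
  assert (Hle := is_lim_seq_le (fun _ => L) (fun N => prod_lt (fun k => 1 + - d * q ^ k) N)
                  L (qpoch_inf q 1 (- d))).
  simpl in Hle. apply Hle; [| apply is_lim_seq_const | apply is_lim_seq_qpoch_inf].
  intro N. eapply Rle_trans; [| apply exp_le_qprod; auto].
  apply exp_le_compat.
  assert (0 <= d / (1 - d)) by (apply Rdiv_le_0_compat; lra).
  assert (H1 := qint_le N). nra.
Qed.


(** * A q-analogue of Gauss's summation *)

Section QGauss.
Variable z : R.
Hypothesis hz0 : 0 < z.
Hypothesis hz1 : z < 1.

Definition gauss_coef (k : nat) : R := prod_lt (fun i => (z - q ^ S i) / (1 - q ^ S i)) k.

Hypothesis gauss_coef_summable : ex_series (fun k => Rabs (gauss_coef k)).

Lemma gauss_coef_succ k : gauss_coef (S k) * (1 - q ^ S k) = gauss_coef k * (z - q ^ S k).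
Proof. unfold gauss_coef; cbn [prod_lt]. assert (H := qpow_succ_lt_1 k). field. lra. Qed.

Definition qbinom_series (s : R) : R := Series (fun k => gauss_coef k * s ^ k).

Lemma ex_series_qbinom s : 0 <= s <= 1 -> ex_series (fun k => gauss_coef k * s ^ k).
Proof.
  intro Hs. apply ex_series_Rabs_le with (fun k => Rabs (gauss_coef k)); auto.
  intro k. rewrite Rabs_mult, (Rabs_pos_eq (s ^ k)) by (apply pow_le; lra).
  assert (s ^ k <= 1) by (apply pow_le_1; lra).
  assert (0 <= Rabs (gauss_coef k)) by apply Rabs_pos. nra.
Qed.

Lemma qbinom_series_shift s : 0 <= s <= 1 ->
  (1 - z * s) * qbinom_series s = (1 - q * s) * qbinom_series (q * s).
Proof.
  intro Hs. assert (Hqs : 0 <= q * s <= 1) by nra.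
  assert (T : is_series (fun k => (1 - z * s) * (gauss_coef k * s ^ k)
                                 - (1 - q * s) * (gauss_coef k * (q * s) ^ k)) 0).
  { apply is_series_telescope with (fun k => gauss_coef k * s ^ k * (1 - q ^ k)).
    - intro k. rewrite Rpow_mult_distr.
      assert (E := gauss_coef_succ k). simpl pow in *.
      replace (gauss_coef (S k) * (s * s ^ k) * (1 - q * q ^ k))
        with (s * s ^ k * (gauss_coef (S k) * (1 - q * q ^ k))) by ring.
      rewrite E. ring.
    - simpl. ring.
    - apply is_lim_seq_0_dominated with gauss_coef 1; auto. intro k.
      rewrite !Rabs_mult, Rmult_1_l, (Rabs_pos_eq (s ^ k)) by (apply pow_le; lra).
      assert (H1 := qpow_pos k). assert (H2 := qpow_le_1 k).
      rewrite (Rabs_pos_eq (1 - q ^ k)) by lra.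
      assert (s ^ k <= 1) by (apply pow_le_1; lra). assert (0 <= s ^ k) by (apply pow_le; lra).
      assert (0 <= Rabs (gauss_coef k)) by apply Rabs_pos.
      assert (0 <= s ^ k * (1 - q ^ k) <= 1) by nra. nra. }
  apply is_series_unique in T.
  rewrite Series_minus, !Series_scal_l in T; unfold qbinom_series; [lra | |].
  - apply (ex_series_scal_l _ (fun k => gauss_coef k * s ^ k)). apply ex_series_qbinom; auto.
  - apply (ex_series_scal_l _ (fun k => gauss_coef k * (q * s) ^ k)). apply ex_series_qbinom; auto.
Qed.

Lemma qbinom_series_near_0 s : 0 <= s <= 1 ->
  Rabs (qbinom_series s - 1) <= s * Series (fun k => Rabs (gauss_coef k)).
Proof.
  intro Hs.
  assert (E0 : is_series (fun k => gauss_coef k * 0 ^ k) 1).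
  { apply is_series_iff_lim_sum_n.
    apply is_lim_seq_ext with (u := fun _ => 1); [| apply is_lim_seq_const].
    intro N. induction N.
    - rewrite sum_O. unfold gauss_coef; simpl. ring.
    - rewrite sum_n_succ, <- IHN. simpl. ring. }
  assert (E1 : qbinom_series s - 1 = Series (fun k => gauss_coef k * s ^ k - gauss_coef k * 0 ^ k)).
  { rewrite Series_minus, (is_series_unique _ _ E0); auto.
    - apply ex_series_qbinom; auto.
    - exists 1; auto. }
  rewrite E1, <- Series_scal_l.
  apply Series_Rabs_le; [apply (ex_series_scal_l s (fun k => Rabs (gauss_coef k))); auto |].
  intro k. assert (0 <= Rabs (gauss_coef k)) by apply Rabs_pos. destruct k.
  - simpl. rewrite Rminus_diag, Rabs_R0. nra.
  - replace (gauss_coef (S k) * s ^ S k - gauss_coef (S k) * 0 ^ S k)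
      with (gauss_coef (S k) * s ^ S k) by (simpl; ring).
    rewrite Rabs_mult, (Rabs_pos_eq (s ^ S k)) by (apply pow_le; lra).
    assert (s ^ S k <= s) by (simpl; assert (s ^ k <= 1) by (apply pow_le_1; lra); nra).
    nra.
Qed.

Lemma qbinom_series_iter N :
  prod_lt (fun i => 1 + - z * q ^ i) N * qbinom_series 1
  = prod_lt (fun i => 1 + - q * q ^ i) N * qbinom_series (q ^ N).
Proof.
  induction N; cbn [prod_lt]; [simpl; ring |].
  assert (H := qbinom_series_shift (q ^ N) ltac:(split; [left; apply qpow_pos | apply qpow_le_1])).
  replace (q ^ S N) with (q * q ^ N) by (simpl; ring).
  transitivity ((1 + - z * q ^ N) * (prod_lt (fun i => 1 + - z * q ^ i) N * qbinom_series 1));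
    [ring |].
  rewrite IHN.
  transitivity (prod_lt (fun i => 1 + - q * q ^ i) N * ((1 - z * q ^ N) * qbinom_series (q ^ N)));
    [ring |].
  rewrite H. ring.
Qed.

Lemma qbinom_series_1 : qbinom_series 1 = qpoch_inf q 1 (- q) / qpoch_inf q 1 (- z).
Proof.
  assert (Hz : 0 < qpoch_inf q 1 (- z)) by (apply qpoch_inf_pos; lra).
  assert (Hlim : is_lim_seq (fun N => qbinom_series (q ^ N)) 1).
  { apply is_lim_seq_geom_error with (K := Series (fun k => Rabs (gauss_coef k))) (rho := q);
      [lra |].
    intro N. rewrite Rmult_comm.
    apply qbinom_series_near_0. split; [left; apply qpow_pos | apply qpow_le_1]. }
  assert (E := is_lim_seq_mult_eq _ _ _ _ _ _ _ (is_lim_seq_qpoch_inf (- z))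
                 (is_lim_seq_qpoch_inf (- q)) Hlim qbinom_series_iter).
  apply Rmult_eq_reg_l with (qpoch_inf q 1 (- z)); [| lra].
  rewrite E. field. lra.
Qed.

Variable X : R.
Hypothesis hX0 : 0 < X.
Hypothesis hX1 : q * X < 1.

Definition gauss_weight (b : R) (k : nat) : R :=
  match k with O => 1 | _ => (1 - b) / (1 - b * q ^ k) end.

Definition gauss_series (b : R) : R := Series (fun k => gauss_coef k * gauss_weight b k).

Lemma gauss_denom_ge b k : 0 <= b <= X -> 1 - q * X <= 1 - b * q ^ S k.
Proof. intro Hb. assert (H := qpow_succ_le k). assert (0 < q ^ S k) by apply qpow_pos. nra. Qed.

Lemma gauss_weight_bound b k : 0 <= b <= X ->
  Rabs (gauss_weight b k) <= 1 + (1 + X) / (1 - q * X).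
Proof.
  intro Hb. assert (0 <= (1 + X) / (1 - q * X)) by (apply Rdiv_le_0_compat; lra).
  destruct k; [simpl; rewrite Rabs_R1; lra |].
  unfold gauss_weight. assert (Hd := gauss_denom_ge b k Hb).
  unfold Rdiv. rewrite Rabs_mult, Rabs_inv, (Rabs_pos_eq (1 - b * q ^ S k)) by lra.
  assert (Rabs (1 - b) <= 1 + X) by (apply Rabs_le; lra).
  assert (/ (1 - b * q ^ S k) <= / (1 - q * X)) by (apply Rinv_le_contravar; lra).
  assert (0 < / (1 - b * q ^ S k)) by (apply Rinv_0_lt_compat; lra).
  assert (Rabs (1 - b) * / (1 - b * q ^ S k) <= (1 + X) * / (1 - q * X))
    by (apply Rmult_le_compat; auto; [apply Rabs_pos | lra]).
  lra.
Qed.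

Lemma ex_series_gauss b : 0 <= b <= X -> ex_series (fun k => gauss_coef k * gauss_weight b k).
Proof.
  intro Hb.
  apply ex_series_Rabs_le with (fun k => (1 + (1 + X) / (1 - q * X)) * Rabs (gauss_coef k)).
  - apply (ex_series_scal_l _ (fun k => Rabs (gauss_coef k))); auto.
  - intro k. rewrite Rabs_mult, Rmult_comm.
    apply Rmult_le_compat_r; [apply Rabs_pos | apply gauss_weight_bound; auto].
Qed.

Definition gauss_remainder (b : R) (k : nat) : R :=
  (1 - q * b) * (- b * gauss_coef k * (1 - q ^ k) / (1 - b * q ^ k)).

Lemma gauss_remainder_telescope b k : 0 <= b <= X ->
  (1 - q * b) * (gauss_coef k * gauss_weight b k)
  - (1 - z * b) * (gauss_coef k * gauss_weight (q * b) k)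
  = gauss_remainder b k - gauss_remainder b (S k).
Proof.
  intro Hb. unfold gauss_remainder. destruct k.
  - unfold gauss_weight, gauss_coef; simpl. rewrite Rminus_diag.
    unfold Rdiv at 1. rewrite Rmult_0_r, Rmult_0_l, Rmult_0_r. field. split; nra.
  - assert (E := gauss_coef_succ (S k)).
    assert (D1 := gauss_denom_ge b k Hb). assert (D2 := gauss_denom_ge b (S k) Hb).
    assert (D3 := qpow_succ_lt_1 k). assert (D4 := qpow_succ_lt_1 (S k)).
    unfold gauss_weight.
    replace (q ^ S (S k)) with (q * q ^ S k) in * by (simpl; ring).
    set (p := q ^ S k) in *.
    replace (- b * gauss_coef (S (S k)) * (1 - q * p) / (1 - b * (q * p))) with
      (- b * (gauss_coef (S k) * (z - q * p)) / (1 - b * (q * p)))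
      by (rewrite <- E; field; lra).
    field. repeat split; lra.
Qed.

Lemma gauss_remainder_bound b k : 0 <= b <= X ->
  Rabs (gauss_remainder b k) <= X / (1 - q * X) * Rabs (gauss_coef k).
Proof.
  intro Hb. unfold gauss_remainder.
  assert (0 <= Rabs (gauss_coef k)) by apply Rabs_pos.
  assert (0 <= X / (1 - q * X)) by (apply Rdiv_le_0_compat; lra).
  destruct k.
  - simpl. rewrite Rminus_diag. unfold Rdiv.
    rewrite Rmult_0_r, Rmult_0_l, Rmult_0_r, Rabs_R0. nra.
  - assert (D1 := gauss_denom_ge b k Hb). assert (D3 := qpow_succ_lt_1 k).
    assert (P := qpow_pos (S k)).
    unfold Rdiv. rewrite !Rabs_mult, Rabs_inv, Rabs_Ropp.
    rewrite (Rabs_pos_eq (1 - q * b)), (Rabs_pos_eq b), (Rabs_pos_eq (1 - q ^ S k)),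
      (Rabs_pos_eq (1 - b * q ^ S k)) by nra.
    assert (/ (1 - b * q ^ S k) <= / (1 - q * X)) by (apply Rinv_le_contravar; lra).
    assert (0 < / (1 - b * q ^ S k)) by (apply Rinv_0_lt_compat; lra).
    set (C := Rabs (gauss_coef (S k))) in *.
    set (I1 := / (1 - b * q ^ S k)) in *. set (I2 := / (1 - q * X)) in *.
    assert (A1 : 0 <= 1 - q * b <= 1) by nra. assert (A2 : 0 <= 1 - q ^ S k <= 1) by lra.
    assert (A3 : 0 <= (1 - q * b) * (1 - q ^ S k) <= 1) by (split; nra).
    assert (0 <= (1 - q * b) * b * (1 - q ^ S k) <= X) by (split; nra).
    assert (0 <= C * I1 <= C * I2) by (split; nra).
    nra.
Qed.

Lemma gauss_series_shift b : 0 <= b <= X ->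
  (1 - q * b) * gauss_series b = (1 - z * b) * gauss_series (q * b).
Proof.
  intro Hb. assert (Hqb : 0 <= q * b <= X) by nra.
  assert (T : is_series (fun k => (1 - q * b) * (gauss_coef k * gauss_weight b k)
                         - (1 - z * b) * (gauss_coef k * gauss_weight (q * b) k)) 0).
  { apply is_series_telescope with (gauss_remainder b).
    - intro k. apply gauss_remainder_telescope; auto.
    - unfold gauss_remainder. simpl. rewrite Rminus_diag. unfold Rdiv.
      rewrite Rmult_0_r, Rmult_0_l, Rmult_0_r. auto.
    - apply is_lim_seq_0_dominated with gauss_coef (X / (1 - q * X)); auto.
      intro k. apply gauss_remainder_bound; auto. }
  apply is_series_unique in T.
  rewrite Series_minus, !Series_scal_l in T; unfold gauss_series; [lra | |].
  - apply (ex_series_scal_l _ (fun k => gauss_coef k * gauss_weight b k)).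
    apply ex_series_gauss; auto.
  - apply (ex_series_scal_l _ (fun k => gauss_coef k * gauss_weight (q * b) k)).
    apply ex_series_gauss; auto.
Qed.

Lemma gauss_series_near_0 b : 0 <= b <= X ->
  Rabs (gauss_series b - qbinom_series 1)
  <= b * (/ (1 - q * X) * Series (fun k => Rabs (gauss_coef k))).
Proof.
  intro Hb.
  assert (E1 : gauss_series b - qbinom_series 1
               = Series (fun k => gauss_coef k * gauss_weight b k - gauss_coef k * 1 ^ k)).
  { rewrite Series_minus; auto; [apply ex_series_gauss | apply ex_series_qbinom]; lra. }
  rewrite E1, <- Rmult_assoc, <- Series_scal_l.
  apply Series_Rabs_le.
  { apply (ex_series_scal_l (b * / (1 - q * X)) (fun k => Rabs (gauss_coef k))); auto. }
  assert (0 < / (1 - q * X)) by (apply Rinv_0_lt_compat; lra).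
  intro k. assert (0 <= Rabs (gauss_coef k)) by apply Rabs_pos. destruct k.
  - simpl. rewrite Rminus_diag, Rabs_R0.
    assert (0 <= b * / (1 - q * X)) by nra. nra.
  - assert (D1 := gauss_denom_ge b k Hb). assert (D3 := qpow_succ_lt_1 k).
    assert (P := qpow_pos (S k)).
    unfold gauss_weight. rewrite pow1.
    replace (gauss_coef (S k) * ((1 - b) / (1 - b * q ^ S k)) - gauss_coef (S k) * 1) with
      (gauss_coef (S k) * (- b * (1 - q ^ S k)) * / (1 - b * q ^ S k)) by (field; lra).
    rewrite !Rabs_mult, Rabs_inv, Rabs_Ropp, (Rabs_pos_eq b), (Rabs_pos_eq (1 - q ^ S k)),
      (Rabs_pos_eq (1 - b * q ^ S k)) by lra.
    assert (/ (1 - b * q ^ S k) <= / (1 - q * X)) by (apply Rinv_le_contravar; lra).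
    assert (0 < / (1 - b * q ^ S k)) by (apply Rinv_0_lt_compat; lra).
    set (C := Rabs (gauss_coef (S k))) in *.
    set (I1 := / (1 - b * q ^ S k)) in *. set (I2 := / (1 - q * X)) in *.
    assert (0 <= b * (1 - q ^ S k) <= b) by (split; nra).
    assert (0 <= C * I1 <= C * I2) by (split; nra).
    nra.
Qed.

Lemma gauss_series_iter N :
  prod_lt (fun i => 1 + - (q * X) * q ^ i) N * gauss_series X
  = prod_lt (fun i => 1 + - (z * X) * q ^ i) N * gauss_series (q ^ N * X).
Proof.
  induction N; cbn [prod_lt]; [simpl; rewrite !Rmult_1_l; reflexivity |].
  assert (Hb : 0 <= q ^ N * X <= X).
  { assert (H1 := qpow_pos N). assert (H2 := qpow_le_1 N). split; nra. }
  assert (H := gauss_series_shift (q ^ N * X) Hb).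
  replace (q ^ S N * X) with (q * (q ^ N * X)) by (simpl; ring).
  transitivity ((1 + - (q * X) * q ^ N)
                * (prod_lt (fun i => 1 + - (q * X) * q ^ i) N * gauss_series X)); [ring |].
  rewrite IHN.
  transitivity (prod_lt (fun i => 1 + - (z * X) * q ^ i) N
                * ((1 - q * (q ^ N * X)) * gauss_series (q ^ N * X))); [ring |].
  rewrite H. ring.
Qed.

Theorem qgauss_sum : gauss_series X =
  qpoch_inf q 1 (- (z * X)) * qpoch_inf q 1 (- q)
  / (qpoch_inf q 1 (- (q * X)) * qpoch_inf q 1 (- z)).
Proof.
  assert (Hz : 0 < qpoch_inf q 1 (- z)) by (apply qpoch_inf_pos; lra).
  assert (Hx : 0 < qpoch_inf q 1 (- (q * X))) by (apply qpoch_inf_pos; nra).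
  assert (Hlim : is_lim_seq (fun N => gauss_series (q ^ N * X)) (qbinom_series 1)).
  { set (C := / (1 - q * X) * Series (fun k => Rabs (gauss_coef k))).
    apply is_lim_seq_geom_error with (K := X * C) (rho := q); [lra |].
    intro N. replace (X * C * q ^ N) with ((q ^ N * X) * C) by ring.
    apply gauss_series_near_0.
    assert (H1 := qpow_pos N). assert (H2 := qpow_le_1 N). split; nra. }
  assert (E := is_lim_seq_mult_eq _ _ _ _ _ _ _ (is_lim_seq_qpoch_inf (- (q * X)))
                 (is_lim_seq_qpoch_inf (- (z * X))) Hlim gauss_series_iter).
  rewrite qbinom_series_1 in E.
  apply Rmult_eq_reg_l with (qpoch_inf q 1 (- (q * X))); [| lra].
  rewrite E. field. lra.
Qed.

End QGauss.

(** * Truncated sums of zeta[{1}^n] *)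

Definition inv_qint (k : nat) : R := (1 - q) / (1 - q ^ k).
Definition qpow_inv_qint (k : nat) : R := q ^ k * inv_qint k.
Definition zeta1_trunc (n k : nat) : R := mzv_trunc q (repeat 1%nat n) k.

Lemma qnum_nat k : qnum q (INR k) = (1 - q ^ k) / (1 - q).
Proof. unfold qnum. rewrite Rpower_pow by lra. auto. Qed.

Lemma mzv_term_succ s k : mzv_term q (S s) k = inv_qint k * qpow_inv_qint k ^ s.
Proof.
  unfold mzv_term, qpow_inv_qint. rewrite qnum_nat.
  replace (S s - 1)%nat with s by lia.
  rewrite Nat.mul_comm, pow_mult. unfold Rdiv at 1. rewrite <- pow_inv, Rinv_div.
  fold (inv_qint k). simpl. rewrite Rpow_mult_distr. ring.
Qed.

Lemma inv_qint_pos k : 0 < inv_qint (S k).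
Proof. assert (H := qpow_succ_lt_1 k). apply Rdiv_lt_0_compat; lra. Qed.

Lemma inv_qint_ge k : 1 - q <= inv_qint (S k).
Proof.
  unfold inv_qint. assert (H := qpow_succ_lt_1 k). assert (H0 := qpow_pos (S k)).
  apply Rmult_le_reg_r with (1 - q ^ S k); [lra |].
  unfold Rdiv. rewrite Rmult_assoc, Rinv_l by lra. nra.
Qed.

Lemma qpow_inv_qint_bound k : 0 < qpow_inv_qint (S k) <= q.
Proof.
  unfold qpow_inv_qint. assert (Hu := inv_qint_pos k).
  assert (H := qpow_succ_lt_1 k). assert (H1 := qpow_succ_le k). assert (H0 := qpow_pos (S k)).
  assert (inv_qint (S k) <= 1).
  { unfold inv_qint. apply Rmult_le_reg_r with (1 - q ^ S k); [lra |].
    unfold Rdiv. rewrite Rmult_assoc, Rinv_l by lra. lra. }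
  split; nra.
Qed.

Lemma zeta1_trunc_0 k : zeta1_trunc 0 k = 1.
Proof. reflexivity. Qed.

Lemma zeta1_trunc_S_1 n : zeta1_trunc (S n) 1 = 0.
Proof. unfold zeta1_trunc; simpl. rewrite sum_n_m_zero by lia. reflexivity. Qed.

Lemma zeta1_trunc_SS n i :
  zeta1_trunc (S n) (S (S i)) = zeta1_trunc (S n) (S i) + inv_qint (S i) * zeta1_trunc n (S i).
Proof.
  unfold zeta1_trunc. cbn [repeat mzv_trunc].
  replace (S (S i) - 1)%nat with (S i) by lia. replace (S i - 1)%nat with i by lia.
  rewrite sum_n_Sm by lia. rewrite mzv_term_succ. simpl. rewrite Rmult_1_r. reflexivity.
Qed.

Lemma zeta1_trunc_nonneg n i : 0 <= zeta1_trunc n (S i).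
Proof.
  revert n. induction i; intros [| n]; try (rewrite zeta1_trunc_0; lra).
  - rewrite zeta1_trunc_S_1. lra.
  - rewrite zeta1_trunc_SS.
    assert (H := inv_qint_pos i). assert (I1 := IHi n). assert (I2 := IHi (S n)). nra.
Qed.

Lemma zeta1_trunc_eq_0 n i : (i < n)%nat -> zeta1_trunc n (S i) = 0.
Proof.
  revert n. induction i; intros n Hn; destruct n; try lia.
  - apply zeta1_trunc_S_1.
  - rewrite zeta1_trunc_SS, !IHi by lia. ring.
Qed.

Definition genprod (s : R) (i : nat) : R := prod_lt (fun j => 1 + s * inv_qint (S j)) i.

Lemma sum_zeta1_trunc (s : R) i N : (i <= N)%nat ->
  sum_n (fun n => s ^ n * zeta1_trunc n (S i)) N = genprod s i.
Proof.
  unfold genprod. revert N. induction i; intros N HN.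
  - simpl. induction N.
    + rewrite sum_O, zeta1_trunc_0. simpl. ring.
    + rewrite sum_n_succ, IHN by lia. rewrite zeta1_trunc_S_1. ring.
  - destruct N; [lia |].
    rewrite sum_n_shift.
    rewrite (sum_n_ext _ (fun n => s ^ S n * zeta1_trunc (S n) (S i)
                                   + (s * inv_qint (S i)) * (s ^ n * zeta1_trunc n (S i)))).
    2: { intro n. rewrite zeta1_trunc_SS. simpl. ring. }
    rewrite sum_n_Rplus, sum_n_Rmult_l, (IHi N) by lia.
    assert (E := IHi (S N) ltac:(lia)). rewrite sum_n_shift in E.
    cbn [prod_lt] in *. rewrite zeta1_trunc_0 in *. simpl pow in *. lra.
Qed.

Lemma genprod_nonneg t i : 0 <= t -> 0 <= genprod t i.
Proof. intro Ht. apply prod_lt_nonneg. intro k. assert (H := inv_qint_pos k). nra. Qed.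

Lemma genprod_Rabs_le s t i : Rabs s <= t -> Rabs (genprod s i) <= genprod t i.
Proof.
  intro H. unfold genprod. rewrite prod_lt_Rabs. apply prod_lt_le. intro k.
  split; [apply Rabs_pos |].
  assert (Hu := inv_qint_pos k).
  eapply Rle_trans; [apply Rabs_triang |].
  rewrite Rabs_R1, Rabs_mult, (Rabs_pos_eq (inv_qint _)) by lra. nra.
Qed.

Lemma zeta1_trunc_le_genprod (t : R) n i : 0 < t -> t ^ n * zeta1_trunc n (S i) <= genprod t i.
Proof.
  intro Ht. destruct (Compare_dec.le_lt_dec n i).
  - rewrite <- (sum_zeta1_trunc t i i) by lia.
    apply (sum_n_ge_term (fun n => t ^ n * zeta1_trunc n (S i))); auto.
    intro k. apply Rmult_le_pos; [apply pow_le; lra | apply zeta1_trunc_nonneg].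
  - rewrite zeta1_trunc_eq_0, Rmult_0_r by lia. apply genprod_nonneg. lra.
Qed.

Lemma qpow_inv_qint_pow_bound m i : 0 <= qpow_inv_qint (S i) ^ (m + 1) <= qpow_inv_qint (S i).
Proof.
  assert (H := qpow_inv_qint_bound i). split; [apply pow_le; lra |].
  rewrite Nat.add_comm. simpl.
  assert (qpow_inv_qint (S i) ^ m <= 1) by (apply pow_le_1; lra).
  assert (0 <= qpow_inv_qint (S i) ^ m) by (apply pow_le; lra). nra.
Qed.

Section Tails.
Variables s t : R.
Hypothesis ht : 0 < t.
Hypothesis hst : Rabs s <= t.

Let rho := Rabs s / t.
Let partial N i := sum_n (fun n => s ^ n * zeta1_trunc n (S i)) N.

Let ratio_bound : 0 <= rho <= 1.
Proof.
  unfold rho. split; [apply Rdiv_le_0_compat; [apply Rabs_pos | lra] |].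
  apply Rmult_le_reg_r with t; auto. unfold Rdiv. rewrite Rmult_assoc, Rinv_l by lra. lra.
Qed.

Lemma sum_zeta1_trunc_diff_le N d i :
  Rabs (partial (N + d)%nat i - partial N i)
  <= rho ^ S N * sum_n (fun n => t ^ n * zeta1_trunc n (S i)) (N + d).
Proof.
  assert (Hr := ratio_bound). unfold partial. induction d.
  - rewrite Nat.add_0_r, Rminus_diag, Rabs_R0. apply Rmult_le_pos; [apply pow_le; lra |].
    apply sum_n_nonneg. intro k.
    apply Rmult_le_pos; [apply pow_le; lra | apply zeta1_trunc_nonneg].
  - replace (N + S d)%nat with (S (N + d)) by lia. rewrite !sum_n_succ.
    set (M := (N + d)%nat) in *.
    set (A := sum_n (fun n => s ^ n * zeta1_trunc n (S i)) M) in *.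
    set (B := sum_n (fun n => s ^ n * zeta1_trunc n (S i)) N) in *.
    replace (A + s ^ S M * zeta1_trunc (S M) (S i) - B)
      with ((A - B) + s ^ S M * zeta1_trunc (S M) (S i)) by ring.
    eapply Rle_trans; [apply Rabs_triang |]. rewrite Rmult_plus_distr_l.
    apply Rplus_le_compat; [apply IHd |].
    rewrite Rabs_mult, (Rabs_pos_eq (zeta1_trunc _ _)) by apply zeta1_trunc_nonneg.
    rewrite <- RPow_abs.
    replace (Rabs s) with (rho * t) at 1 by (unfold rho; field; lra).
    rewrite Rpow_mult_distr.
    assert (E0 := zeta1_trunc_nonneg (S M) i). assert (T0 : 0 <= t ^ S M) by (apply pow_le; lra).
    assert (rho ^ S M <= rho ^ S N).
    { unfold M. replace (S (N + d)) with (S N + d)%nat by lia. rewrite pow_add.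
      assert (0 <= rho ^ S N) by (apply pow_le; lra).
      assert (rho ^ d <= 1) by (apply pow_le_1; lra). nra. }
    assert (0 <= rho ^ S M) by (apply pow_le; lra).
    assert (0 <= t ^ S M * zeta1_trunc (S M) (S i)) by nra. nra.
Qed.

Lemma genprod_sub_sum_zeta1_trunc_le N i :
  Rabs (genprod s i - partial N i) <= (Rabs s / t) ^ S N * genprod t i.
Proof.
  assert (Hr := ratio_bound). fold rho.
  destruct (Compare_dec.le_lt_dec i N).
  - unfold partial. rewrite sum_zeta1_trunc, Rminus_diag, Rabs_R0 by auto.
    apply Rmult_le_pos; [apply pow_le; lra | apply genprod_nonneg; lra].
  - rewrite <- (sum_zeta1_trunc s i (N + (i - N))) by lia.
    rewrite <- (sum_zeta1_trunc t i (N + (i - N))) by lia.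
    apply sum_zeta1_trunc_diff_le.
Qed.

End Tails.

Definition majorant (t : R) (i : nat) : R := inv_qint (S i) * qpow_inv_qint (S i) * genprod t i.

Lemma majorant_nonneg t i : 0 <= t -> 0 <= majorant t i.
Proof.
  intro Ht. unfold majorant.
  assert (H := inv_qint_pos i). assert (H1 := genprod_nonneg t i Ht).
  assert (H2 := qpow_inv_qint_bound i).
  apply Rmult_le_pos; [apply Rmult_le_pos |]; lra.
Qed.

Lemma majorant_ratio_ineq t p : 0 <= t -> t * q < 1 -> 0 < p < 1 ->
  q * (1 - p) * (1 - p + t * (1 - q)) <= (1 - (1 - t * q) * (1 - q)) * (1 - q * p) ^ 2.
Proof.
  intros Ht Htq Hp. set (d := (1 - t * q) * (1 - q)).
  assert (E : q * (1 - p + t * (1 - q)) = (1 - q * p) - d) by (unfold d; ring).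
  assert (H0 : 0 <= (1 - q * p) - d).
  { unfold d. replace (1 - q * p - (1 - t * q) * (1 - q))
      with (q * (1 - p) + t * (q * (1 - q))) by ring.
    assert (0 <= q * (1 - p)) by nra. assert (0 <= q * (1 - q)) by nra.
    assert (0 <= t * (q * (1 - q))) by nra. lra. }
  assert (Hd : 0 <= d) by (unfold d; nra).
  replace (q * (1 - p) * (1 - p + t * (1 - q))) with ((1 - p) * ((1 - q * p) - d))
    by (rewrite <- E; ring).
  assert (1 - p <= 1 - q * p) by nra.
  assert ((1 - p) * ((1 - q * p) - d) <= (1 - q * p) * ((1 - q * p) - d)) by nra.
  assert (0 < 1 - q * p) by nra.
  assert (0 <= d * (1 - q * p) * (q * p)) by (apply Rmult_le_pos; nra).
  assert (Eq : (1 - d) * (1 - q * p) ^ 2 - (1 - q * p) * ((1 - q * p) - d)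
               = d * (1 - q * p) * (q * p)) by ring.
  lra.
Qed.

Lemma majorant_succ_le t i : 0 <= t -> t * q < 1 ->
  majorant t (S i) <= (1 - (1 - t * q) * (1 - q)) * majorant t i.
Proof.
  intros Ht Htq. unfold majorant, qpow_inv_qint, inv_qint, genprod. cbn [prod_lt].
  fold (genprod t i). assert (HP := genprod_nonneg t i Ht).
  replace (q ^ S (S i)) with (q * q ^ S i) by (simpl; ring).
  set (p := q ^ S i).
  assert (Hp : 0 < p < 1) by (split; [apply qpow_pos | apply qpow_succ_lt_1]).
  assert (K := majorant_ratio_ineq t p Ht Htq Hp).
  set (KK := (1 - q) ^ 2 * p / ((1 - q * p) ^ 2 * (1 - p) ^ 2)).
  assert (HK : 0 < KK).
  { unfold KK. apply Rdiv_lt_0_compat; apply Rmult_lt_0_compat; try apply pow_lt; nra. }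
  change (inv_qint (S i)) with ((1 - q) / (1 - p)).
  replace ((1 - q) / (1 - q * p) * (q * p * ((1 - q) / (1 - q * p)))
           * (genprod t i * (1 + t * ((1 - q) / (1 - p)))))
    with (genprod t i * (KK * (q * (1 - p) * (1 - p + t * (1 - q)))))
    by (unfold KK; field; split; nra).
  replace ((1 - (1 - t * q) * (1 - q)) * ((1 - q) / (1 - p) * (p * ((1 - q) / (1 - p)))
           * genprod t i))
    with (genprod t i * (KK * ((1 - (1 - t * q) * (1 - q)) * (1 - q * p) ^ 2)))
    by (unfold KK; field; split; nra).
  apply Rmult_le_compat_l; auto. apply Rmult_le_compat_l; lra.
Qed.

Lemma ex_series_majorant t : 0 <= t -> t * q < 1 -> ex_series (majorant t).
Proof.
  intros Ht Htq. apply ex_series_ratio_le with (1 - (1 - t * q) * (1 - q)).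
  - assert (0 < (1 - t * q) * (1 - q)) by nra. split; nra.
  - intro. apply majorant_nonneg; auto.
  - intro. apply majorant_succ_le; auto.
Qed.

(** * The double series *)

Section DoubleSeries.
Variables a b t : R.
Hypothesis ht0 : 0 < t.
Hypothesis hbt : Rabs b < t.
Hypothesis htq : t * q < 1.

Definition row_coef (m i : nat) : R :=
  (-1) ^ m * a ^ (m + 1) * b * (inv_qint (S i) * qpow_inv_qint (S i) ^ (m + 1)).

Definition row_sum (m : nat) : R := Series (fun i => row_coef m i * genprod (- b) i).

Let ex_series_majorant_t : ex_series (majorant t).
Proof. apply ex_series_majorant; lra. Qed.

Lemma row_coef_bound m i :
  Rabs (row_coef m i) <= Rabs a ^ (m + 1) * Rabs b * (inv_qint (S i) * qpow_inv_qint (S i)).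
Proof.
  unfold row_coef. rewrite !Rabs_mult, <- !RPow_abs, Rabs_m1, pow1, Rmult_1_l.
  assert (Hu := inv_qint_pos i). assert (Hv := qpow_inv_qint_pow_bound m i).
  assert (Hv1 := qpow_inv_qint_bound i).
  rewrite (Rabs_pos_eq (inv_qint (S i))), (Rabs_pos_eq (qpow_inv_qint (S i))) by lra.
  assert (0 <= Rabs a ^ (m + 1) * Rabs b)
    by (apply Rmult_le_pos; [apply pow_le, Rabs_pos | apply Rabs_pos]).
  apply Rmult_le_compat_l; auto. apply Rmult_le_compat_l; lra.
Qed.

Lemma ex_series_qzeta_terms m n :
  ex_series (fun i => mzv_term q (m + 2) (S i) * zeta1_trunc n (S i)).
Proof.
  apply ex_series_Rabs_le with (fun i => / t ^ n * majorant t i);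
    [apply (ex_series_scal_l (/ t ^ n) (majorant t)); auto |].
  intro i. replace (m + 2)%nat with (S (m + 1)) by lia. rewrite mzv_term_succ.
  assert (Hu := inv_qint_pos i). assert (Hv := qpow_inv_qint_pow_bound m i).
  assert (HE := zeta1_trunc_nonneg n i). assert (HB := zeta1_trunc_le_genprod t n i ht0).
  assert (Htn : 0 < t ^ n) by (apply pow_lt; lra).
  rewrite Rabs_pos_eq by (apply Rmult_le_pos; [apply Rmult_le_pos |]; lra).
  unfold majorant.
  assert (zeta1_trunc n (S i) <= / t ^ n * genprod t i).
  { apply Rmult_le_reg_l with (t ^ n); auto.
    rewrite <- Rmult_assoc, Rinv_r, Rmult_1_l by lra. auto. }
  assert (0 <= inv_qint (S i) * qpow_inv_qint (S i) ^ (m + 1)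
            <= inv_qint (S i) * qpow_inv_qint (S i)) by (split; nra).
  assert (0 <= / t ^ n * genprod t i) by lra.
  replace (/ t ^ n * (inv_qint (S i) * qpow_inv_qint (S i) * genprod t i))
    with ((inv_qint (S i) * qpow_inv_qint (S i)) * (/ t ^ n * genprod t i)) by ring.
  apply Rmult_le_compat; lra.
Qed.

Lemma row_coef_genprod_bound m i :
  Rabs (row_coef m i * genprod (- b) i) <= Rabs a ^ (m + 1) * Rabs b * majorant t i.
Proof.
  rewrite Rabs_mult. unfold majorant.
  assert (H1 := row_coef_bound m i).
  assert (H2 := genprod_Rabs_le (- b) t i ltac:(rewrite Rabs_Ropp; lra)).
  assert (0 <= Rabs (row_coef m i)) by apply Rabs_pos.
  assert (0 <= Rabs (genprod (- b) i)) by apply Rabs_pos.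
  replace (Rabs a ^ (m + 1) * Rabs b * (inv_qint (S i) * qpow_inv_qint (S i) * genprod t i))
    with (Rabs a ^ (m + 1) * Rabs b * (inv_qint (S i) * qpow_inv_qint (S i)) * genprod t i)
    by ring.
  apply Rmult_le_compat; auto.
Qed.

Lemma ex_series_row m : ex_series (fun i => row_coef m i * genprod (- b) i).
Proof.
  apply ex_series_Rabs_le with (fun i => Rabs a ^ (m + 1) * Rabs b * majorant t i).
  - apply (ex_series_scal_l _ (majorant t)); auto.
  - apply row_coef_genprod_bound.
Qed.

Lemma row_term_factor m n i :
  (-1) ^ (m + n) * a ^ (m + 1) * b ^ (n + 1)
  * (mzv_term q (m + 2) (S i) * zeta1_trunc n (S i))
  = row_coef m i * ((- b) ^ n * zeta1_trunc n (S i)).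
Proof.
  replace (m + 2)%nat with (S (m + 1)) by lia. rewrite mzv_term_succ. unfold row_coef.
  rewrite pow_add, (pow_add b). replace (- b) with ((-1) * b) by ring.
  rewrite Rpow_mult_distr, pow_1. ring.
Qed.

Lemma row_term_eq m n :
  (-1) ^ (m + n) * a ^ (m + 1) * b ^ (n + 1) * qzeta q ((m + 2)%nat :: repeat 1%nat n)
  = Series (fun i => row_coef m i * ((- b) ^ n * zeta1_trunc n (S i))).
Proof.
  change (qzeta q ((m + 2)%nat :: repeat 1%nat n))
    with (Series (fun i => mzv_term q (m + 2) (S i) * zeta1_trunc n (S i))).
  rewrite <- Series_scal_l. apply Series_ext. intro i. apply row_term_factor.
Qed.

Lemma ex_series_row_terms m n :
  ex_series (fun i => row_coef m i * ((- b) ^ n * zeta1_trunc n (S i))).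
Proof.
  apply ex_series_ext with (fun i => ((-1) ^ (m + n) * a ^ (m + 1) * b ^ (n + 1))
                                     * (mzv_term q (m + 2) (S i) * zeta1_trunc n (S i))).
  - intro i. apply row_term_factor.
  - apply (ex_series_scal_l _ (fun i => mzv_term q (m + 2) (S i) * zeta1_trunc n (S i))).
    apply ex_series_qzeta_terms.
Qed.

Lemma sum_n_row_terms m N :
  sum_n (fun n => (-1) ^ (m + n) * a ^ (m + 1) * b ^ (n + 1)
                  * qzeta q ((m + 2)%nat :: repeat 1%nat n)) N
  = Series (fun i => row_coef m i * sum_n (fun n => (- b) ^ n * zeta1_trunc n (S i)) N).
Proof.
  rewrite (sum_n_ext _ _ N (row_term_eq m)), Series_sum_n by apply ex_series_row_terms.
  apply Series_ext. intro i. rewrite sum_n_Rmult_l. auto.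
Qed.

Lemma ex_series_row_partial m N :
  ex_series (fun i => row_coef m i * sum_n (fun n => (- b) ^ n * zeta1_trunc n (S i)) N).
Proof.
  apply ex_series_ext
    with (fun i => sum_n (fun n => row_coef m i * ((- b) ^ n * zeta1_trunc n (S i))) N).
  - intro i. rewrite sum_n_Rmult_l. auto.
  - apply (ex_series_sum_n (fun n i => row_coef m i * ((- b) ^ n * zeta1_trunc n (S i)))).
    apply ex_series_row_terms.
Qed.

Lemma row_partial_error m N i :
  Rabs (row_coef m i * sum_n (fun n => (- b) ^ n * zeta1_trunc n (S i)) N
        - row_coef m i * genprod (- b) i)
  <= Rabs a ^ (m + 1) * Rabs b * (Rabs b / t) ^ S N * majorant t i.
Proof.
  set (P := sum_n (fun n => (- b) ^ n * zeta1_trunc n (S i)) N).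
  replace (row_coef m i * P - row_coef m i * genprod (- b) i)
    with (- (row_coef m i * (genprod (- b) i - P))) by ring.
  rewrite Rabs_Ropp, Rabs_mult.
  assert (H1 := row_coef_bound m i).
  assert (H2 := genprod_sub_sum_zeta1_trunc_le (- b) t ht0 ltac:(rewrite Rabs_Ropp; lra) N i).
  rewrite Rabs_Ropp in H2. fold P in H2.
  assert (0 <= Rabs (row_coef m i)) by apply Rabs_pos.
  assert (0 <= Rabs (genprod (- b) i - P)) by apply Rabs_pos.
  unfold majorant.
  replace (Rabs a ^ (m + 1) * Rabs b * (Rabs b / t) ^ S N
           * (inv_qint (S i) * qpow_inv_qint (S i) * genprod t i))
    with ((Rabs a ^ (m + 1) * Rabs b * (inv_qint (S i) * qpow_inv_qint (S i)))
          * ((Rabs b / t) ^ S N * genprod t i)) by ring.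
  apply Rmult_le_compat; auto.
Qed.

Lemma is_series_row m :
  is_series (fun n => (-1) ^ (m + n) * a ^ (m + 1) * b ^ (n + 1)
                      * qzeta q ((m + 2)%nat :: repeat 1%nat n)) (row_sum m).
Proof.
  apply is_series_iff_lim_sum_n.
  eapply is_lim_seq_ext; [intro N; symmetry; apply sum_n_row_terms |].
  set (rho := Rabs b / t).
  assert (Hr : 0 <= rho < 1).
  { unfold rho. split; [apply Rdiv_le_0_compat; [apply Rabs_pos | lra] |].
    apply Rmult_lt_reg_r with t; auto. unfold Rdiv. rewrite Rmult_assoc, Rinv_l by lra. lra. }
  set (K := Rabs a ^ (m + 1) * Rabs b).
  apply is_lim_seq_geom_error with (K := K * rho * Series (majorant t)) (rho := rho); auto.
  intro N. unfold row_sum.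
  rewrite <- Series_minus by (apply ex_series_row_partial || apply ex_series_row).
  replace (K * rho * Series (majorant t) * rho ^ N)
    with (Series (fun i => (K * rho ^ S N) * majorant t i))
    by (rewrite Series_scal_l; simpl pow; ring).
  apply Series_Rabs_le; [apply (ex_series_scal_l _ (majorant t)); auto |].
  intro i. apply row_partial_error.
Qed.

Hypothesis ha : Rabs a * q < 1.

Definition col_sum (i : nat) : R :=
  b * inv_qint (S i) * genprod (- b) i
  * (a * qpow_inv_qint (S i) / (1 + a * qpow_inv_qint (S i))).

Lemma Rabs_a_qpow_inv_qint_le i : Rabs (a * qpow_inv_qint (S i)) <= Rabs a * q.
Proof.
  assert (H := qpow_inv_qint_bound i).
  rewrite Rabs_mult, (Rabs_pos_eq (qpow_inv_qint (S i))) by lra.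
  apply Rmult_le_compat_l; [apply Rabs_pos | lra].
Qed.

Lemma one_plus_a_qpow_inv_qint_ge i : 1 - Rabs a * q <= 1 + a * qpow_inv_qint (S i).
Proof. assert (H := Rabs_a_qpow_inv_qint_le i). apply Rabs_le_between in H. lra. Qed.

Lemma col_sum_bound i : Rabs (col_sum i) <= Rabs b * Rabs a / (1 - Rabs a * q) * majorant t i.
Proof.
  unfold col_sum, majorant.
  assert (H1 := one_plus_a_qpow_inv_qint_ge i).
  assert (H2 := genprod_Rabs_le (- b) t i ltac:(rewrite Rabs_Ropp; lra)).
  assert (Hu := inv_qint_pos i). assert (Hv := qpow_inv_qint_bound i).
  rewrite !Rabs_mult. unfold Rdiv.
  rewrite Rabs_mult, Rabs_inv, (Rabs_pos_eq (1 + a * qpow_inv_qint (S i))) by lra.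
  rewrite (Rabs_pos_eq (inv_qint (S i))), Rabs_mult, (Rabs_pos_eq (qpow_inv_qint (S i))) by lra.
  assert (/ (1 + a * qpow_inv_qint (S i)) <= / (1 - Rabs a * q)) by (apply Rinv_le_contravar; lra).
  assert (0 < / (1 + a * qpow_inv_qint (S i))) by (apply Rinv_0_lt_compat; lra).
  set (P := genprod t i) in *. set (Q := Rabs (genprod (- b) i)) in *.
  assert (0 <= Q) by apply Rabs_pos.
  assert (0 <= Rabs a) by apply Rabs_pos. assert (0 <= Rabs b) by apply Rabs_pos.
  replace (Rabs b * Rabs a * / (1 - Rabs a * q) * (inv_qint (S i) * qpow_inv_qint (S i) * P))
    with ((Rabs b * inv_qint (S i) * (Rabs a * qpow_inv_qint (S i))) * (P * / (1 - Rabs a * q)))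
    by ring.
  replace (Rabs b * inv_qint (S i) * Q
           * (Rabs a * qpow_inv_qint (S i) * / (1 + a * qpow_inv_qint (S i))))
    with ((Rabs b * inv_qint (S i) * (Rabs a * qpow_inv_qint (S i)))
          * (Q * / (1 + a * qpow_inv_qint (S i)))) by ring.
  apply Rmult_le_compat_l; [apply Rmult_le_pos; nra |].
  apply Rmult_le_compat; lra.
Qed.

Lemma ex_series_Rabs_col_sum : ex_series (fun i => Rabs (col_sum i)).
Proof.
  apply ex_series_Rabs_le with (fun i => Rabs b * Rabs a / (1 - Rabs a * q) * majorant t i).
  - apply (ex_series_scal_l _ (majorant t)); auto.
  - intro i. rewrite Rabs_Rabsolu. apply col_sum_bound.
Qed.

Lemma ex_series_col_sum_pow M :
  ex_series (fun i => col_sum i * (- (a * qpow_inv_qint (S i))) ^ M).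
Proof.
  apply ex_series_Rabs_le with (fun i => Rabs (col_sum i)); [apply ex_series_Rabs_col_sum |].
  intro i. rewrite Rabs_mult, <- RPow_abs, Rabs_Ropp.
  assert (H := Rabs_a_qpow_inv_qint_le i).
  assert (Rabs (a * qpow_inv_qint (S i)) ^ M <= 1)
    by (apply pow_le_1; split; [apply Rabs_pos | lra]).
  assert (0 <= Rabs (col_sum i)) by apply Rabs_pos. nra.
Qed.

(* Summing the rows over m is an alternating geometric series in a v_(i+1). *)
Lemma sum_n_row_sum M :
  sum_n row_sum M
  = Series col_sum - Series (fun i => col_sum i * (- (a * qpow_inv_qint (S i))) ^ S M).
Proof.
  rewrite <- Series_minus;
    [| apply ex_series_Rabs, ex_series_Rabs_col_sum | apply ex_series_col_sum_pow].
  unfold row_sum. rewrite Series_sum_n by (intro; apply ex_series_row).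
  apply Series_ext. intro i.
  set (w := a * qpow_inv_qint (S i)).
  assert (H := one_plus_a_qpow_inv_qint_ge i). fold w in H.
  rewrite (sum_n_ext _ (fun m => (b * inv_qint (S i) * genprod (- b) i)
                                 * ((-1) ^ m * w ^ (m + 1)))).
  - rewrite sum_n_Rmult_l, sum_n_alt_geom by lra.
    unfold col_sum. fold w. field. lra.
  - intro m. unfold row_coef, w. rewrite Rpow_mult_distr. simpl. ring.
Qed.

Lemma is_series_row_sum : is_series row_sum (Series col_sum).
Proof.
  set (rho := Rabs a * q).
  assert (Hr : 0 <= rho < 1).
  { unfold rho. split; [apply Rmult_le_pos; [apply Rabs_pos | lra] | lra]. }
  apply is_series_iff_lim_sum_n.
  apply is_lim_seq_geom_error with (K := rho * Series (fun i => Rabs (col_sum i))) (rho := rho);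
    auto.
  intro M. rewrite sum_n_row_sum.
  replace (Series col_sum - Series (fun i => col_sum i * (- (a * qpow_inv_qint (S i))) ^ S M)
           - Series col_sum)
    with (- Series (fun i => col_sum i * (- (a * qpow_inv_qint (S i))) ^ S M)) by ring.
  rewrite Rabs_Ropp.
  replace (rho * Series (fun i => Rabs (col_sum i)) * rho ^ M)
    with (Series (fun i => rho ^ S M * Rabs (col_sum i)))
    by (rewrite Series_scal_l; simpl; ring).
  apply Series_Rabs_le;
    [apply (ex_series_scal_l _ (fun i => Rabs (col_sum i))), ex_series_Rabs_col_sum |].
  intro i. rewrite Rabs_mult, <- RPow_abs, Rabs_Ropp, Rmult_comm.
  apply Rmult_le_compat_r; [apply Rabs_pos |].
  apply pow_incr. split; [apply Rabs_pos | apply Rabs_a_qpow_inv_qint_le].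
Qed.

End DoubleSeries.

Lemma Rpower_q_bounds x : Rabs x < 1 -> q < Rpower q x /\ q * Rpower q x < 1.
Proof.
  intro hx. apply Rabs_def2 in hx.
  assert (Hl : ln q < 0) by (rewrite <- ln_1; apply ln_increasing; lra).
  unfold Rpower. rewrite <- (exp_ln q) at 1 3 by lra. rewrite <- exp_plus, <- exp_0.
  split; apply exp_increasing; nra.
Qed.

Lemma Rabs_qnum_mult_q_lt W : q < W -> q * W < 1 -> Rabs ((1 - W) / (1 - q)) * q < 1.
Proof.
  intros H1 H2. unfold Rdiv. rewrite Rabs_mult, Rabs_inv, (Rabs_pos_eq (1 - q)) by lra.
  assert (HI : / (1 - q) * (1 - q) = 1) by (field; lra).
  assert (HI0 : 0 < / (1 - q)) by (apply Rinv_0_lt_compat; lra).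
  set (I := / (1 - q)) in *.
  destruct (Rle_dec W 1).
  - rewrite Rabs_pos_eq by lra.
    assert ((1 - W) * I <= 1) by nra. assert (0 <= (1 - W) * I) by nra. nra.
  - rewrite Rabs_left by lra. assert (q * (W - 1) * I < 1) by nra. nra.
Qed.

Lemma qGamma_ratio x y : Rabs x < 1 -> Rabs y < 1 ->
  qGamma q (1 + x) * qGamma q (1 + y) / qGamma q (1 + x + y) =
  qpoch_inf q 1 (- (q * Rpower q y * Rpower q x)) * qpoch_inf q 1 (- q) /
    (qpoch_inf q 1 (- (q * Rpower q x)) * qpoch_inf q 1 (- (q * Rpower q y))).
Proof.
  intros hx hy.
  destruct (Rpower_q_bounds x hx) as [X0 X1].
  destruct (Rpower_q_bounds y hy) as [Y0 Y1].
  unfold qGamma.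
  rewrite !Rpower_plus, Rpower_1 by lra.
  replace (1 - (1 + x)) with (- x) by ring. replace (1 - (1 + y)) with (- y) by ring.
  replace (1 - (1 + x + y)) with (- x + - y) by ring. rewrite Rpower_plus.
  assert (P1 : 0 < qpoch_inf q 1 (- q)) by (apply qpoch_inf_pos; nra).
  assert (P2 : 0 < qpoch_inf q 1 (- (q * Rpower q x))) by (apply qpoch_inf_pos; nra).
  assert (P3 : 0 < qpoch_inf q 1 (- (q * Rpower q y))) by (apply qpoch_inf_pos; nra).
  assert (E1 : 0 < Rpower (1 - q) (- x)) by apply exp_pos.
  assert (E2 : 0 < Rpower (1 - q) (- y)) by apply exp_pos.
  replace (q * Rpower q x * Rpower q y) with (q * Rpower q y * Rpower q x) by ring.
  set (D := qpoch_inf q 1 (- (q * Rpower q y * Rpower q x))).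
  (* q^(1+x+y) may exceed 1, so D may vanish; both sides are then 0 as / 0 = 0 *)
  destruct (Req_dec D 0) as [HD | HD].
  - rewrite HD. unfold Rdiv. rewrite Rinv_0, !Rmult_0_r, Rinv_0, !Rmult_0_r, !Rmult_0_l. auto.
  - field. repeat split; lra.
Qed.

Section Identification.
Variables X Y : R.
Hypothesis hX0 : q < X.
Hypothesis hX1 : q * X < 1.
Hypothesis hY0 : q < Y.
Hypothesis hY1 : q * Y < 1.

Let a := (1 - X) / (1 - q).
Let b := (1 - Y) / (1 - q).

Lemma gauss_coef_succ_eq i : gauss_coef (q * Y) (S i) = - b * qpow_inv_qint (S i) * genprod (- b) i.
Proof.
  induction i.
  - unfold gauss_coef, genprod, qpow_inv_qint, inv_qint, b. simpl. field. lra.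
  - unfold gauss_coef in *. cbn [prod_lt] in *. rewrite IHi.
    unfold genprod. cbn [prod_lt]. fold (genprod (- b) i).
    unfold qpow_inv_qint, inv_qint, b.
    replace (q ^ S (S i)) with (q * q ^ S i) by (simpl; ring).
    set (p := q ^ S i).
    assert (Hp : 0 < p < 1) by (split; [apply qpow_pos | apply qpow_succ_lt_1]).
    field. split; nra.
Qed.

Definition dominating_radius : R := (Rabs b + / q) / 2.

Lemma dominating_radius_spec :
  0 < dominating_radius /\ Rabs b < dominating_radius /\ dominating_radius * q < 1.
Proof.
  assert (Hb : Rabs b * q < 1) by (apply Rabs_qnum_mult_q_lt; auto).
  assert (Hi : / q * q = 1) by (field; lra). assert (0 < / q) by (apply Rinv_0_lt_compat; lra).
  assert (Rabs b < / q) by (apply Rmult_lt_reg_r with q; auto; lra).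
  assert (0 <= Rabs b) by apply Rabs_pos.
  unfold dominating_radius. split; [lra | split; [lra | nra]].
Qed.

Lemma gauss_coef_qY_summable : ex_series (fun k => Rabs (gauss_coef (q * Y) k)).
Proof.
  destruct dominating_radius_spec as [T1 [T2 T3]]. set (t := dominating_radius) in *.
  apply ex_series_incr_1.
  apply ex_series_Rabs_le with (fun i => Rabs b / (1 - q) * majorant t i);
    [apply (ex_series_scal_l _ (majorant t)), ex_series_majorant; lra |].
  intro i. rewrite Rabs_Rabsolu, gauss_coef_succ_eq.
  assert (Hv := qpow_inv_qint_bound i). assert (Hu := inv_qint_ge i).
  assert (HQ := genprod_Rabs_le (- b) t i ltac:(rewrite Rabs_Ropp; lra)).
  assert (HP := genprod_nonneg t i ltac:(lra)).
  unfold majorant. rewrite !Rabs_mult, Rabs_Ropp, (Rabs_pos_eq (qpow_inv_qint (S i))) by lra.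
  assert (qpow_inv_qint (S i) <= inv_qint (S i) * qpow_inv_qint (S i) / (1 - q)).
  { apply Rmult_le_reg_r with (1 - q); [lra |].
    unfold Rdiv. rewrite Rmult_assoc, Rinv_l by lra. nra. }
  assert (0 <= Rabs b) by apply Rabs_pos. assert (0 <= Rabs (genprod (- b) i)) by apply Rabs_pos.
  replace (Rabs b / (1 - q) * (inv_qint (S i) * qpow_inv_qint (S i) * genprod t i)) with
    (Rabs b * (inv_qint (S i) * qpow_inv_qint (S i) / (1 - q)) * genprod t i) by (field; lra).
  apply Rmult_le_compat; nra.
Qed.

Lemma col_sum_eq i : col_sum a b i = - (gauss_coef (q * Y) (S i) * gauss_weight X (S i)).
Proof.
  rewrite gauss_coef_succ_eq. unfold col_sum, gauss_weight, qpow_inv_qint, inv_qint, a.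
  set (p := q ^ S i).
  assert (Hp : 0 < p < 1) by (split; [apply qpow_pos | apply qpow_succ_lt_1]).
  assert (p <= q) by apply qpow_succ_le.
  field. repeat split; nra.
Qed.

Lemma Series_col_sum : Series (col_sum a b) = 1 - gauss_series (q * Y) X.
Proof.
  assert (Hex := ex_series_gauss (q * Y) gauss_coef_qY_summable X ltac:(lra) hX1 X ltac:(lra)).
  unfold gauss_series. rewrite (Series_incr_1 _ Hex).
  rewrite (Series_ext _ (fun i => (-1) * (gauss_coef (q * Y) (S i) * gauss_weight X (S i))))
    by (intro; rewrite col_sum_eq; ring).
  rewrite Series_scal_l. unfold gauss_coef, gauss_weight. simpl. ring.
Qed.

End Identification.
End Fixed_q.

Theorem theorem7p4 (q x y : R) (hq0 : 0 < q) (hq1 : q < 1)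
    (hx : Rabs x < 1) (hy : Rabs y < 1) :
  exists g : nat -> R,
    (forall m : nat,
       is_series
         (fun n : nat =>
            (-1) ^ (m + n) * qnum q x ^ (m + 1) * qnum q y ^ (n + 1)
            * qzeta q ((m + 2)%nat :: repeat 1%nat n))
         (g m))
    /\ is_series g
         (1 - qGamma q (1 + x) * qGamma q (1 + y) / qGamma q (1 + x + y)).
Proof.
  destruct (Rpower_q_bounds q hq0 hq1 x hx) as [X0 X1].
  destruct (Rpower_q_bounds q hq0 hq1 y hy) as [Y0 Y1].
  destruct (dominating_radius_spec q hq0 hq1 (Rpower q y) Y0 Y1) as [T0 [Tb Tq]].
  assert (Ha : Rabs (qnum q x) * q < 1) by (apply Rabs_qnum_mult_q_lt; auto).
  exists (row_sum q (qnum q x) (qnum q y)). split.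
  - exact (is_series_row q hq0 hq1 _ _ _ T0 Tb Tq).
  - rewrite (qGamma_ratio q hq0 hq1 x y hx hy).
    rewrite <- (qgauss_sum q hq0 hq1 (q * Rpower q y)) by (auto using gauss_coef_qY_summable; nra).
    unfold qnum in *. rewrite <- Series_col_sum by auto.
    exact (is_series_row_sum q hq0 hq1 _ _ _ T0 Tb Tq Ha).
Qed.
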